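(* Let $T$ be a $\pi$-increasing tree whose vertex-set contains $1$ and is not equal to $\{1\}$, and let $M$ be its maximum vertex. Then the blocks $\{1\}$ and $\pi^M$ lie in different connected components of $G_M(T)$. In particular, $T$ is reducible.
   Context: Standing assumptions: $r\ge2$ and $\pi$ is a set partition of $\{1,\dots,r\}$ having $\{1\}$ as a block; $\pi^x$ denotes the block containing $x$, and $\mu_i$ the maximum of block $\pi_i$. An unordered increasing tree is a rooted tree on distinct positive integers, sons unordered, each son larger than its father. A $\pi$-increasing tree is an unordered increasing tree $T$ whose vertex-set is a union of blocks of $\pi$ and such that for any two elements $i<j$ of a same block of $\pi$ contained in $V(T)$, $i$ is an ancestor of $j$ in $T$. $v$-decomposition: for a vertex $v$ of $T$ with chain $a_1<\dots<a_\ell=v$ from the root to $v$, removing the chain edges leaves components $T^{(a_j)}$ rooted at $a_j$. $v$-dependence graph $G_v(T)$: directed graph on the blocks of $\pi$ contained in $V(T)$; for each such block $\pi_i$ whose maximum $\mu_i$ is not on the chain $a_1,\dots,a_\ell$, $\mu_i$ is a non-root vertex of a unique $T^{(a_j)}$ and there is an edge (possibly a loop) $\pi_i\to\pi^{a_j}$; no other edges. Connected components are taken ignoring directions. A $\pi$-increasing tree with maximum vertex $M$ is irreducible if $G_M(T)$ is connected, reducible otherwise. *)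

From mathcomp Require Import all_boot.
From mathcomp Require Import finmap.
From Stdlib Require Import Relations.Relation_Operators.

Set Implicit Arguments.
Unset Strict Implicit.
Unset Printing Implicit Defensive.

Local Open Scope fset_scope.

Definition set_partition (r : nat) (pi : {fset {fset nat}}) : Prop :=
  (forall B, B \in pi -> B != fset0) /\
  (forall B C, B \in pi -> C \in pi -> B != C -> B `&` C = fset0) /\
  (forall x : nat, (exists2 B, B \in pi & x \in B) <-> (1 <= x <= r)%N).

Definition is_max (B : {fset nat}) (m : nat) : Prop :=
  m \in B /\ forall x, x \in B -> (x <= m)%N.

(* An unordered increasing tree with vertex set V, root rt, and father
   function par (only meaningful on the non-root vertices of V). *)
Definition increasing_tree (V : {fset nat}) (rt : nat) (par : nat -> nat) : Prop :=
  rt \in V /\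
  (forall v, v \in V -> (0 < v)%N) /\
  (forall v, v \in V -> v != rt -> par v \in V /\ (par v < v)%N).

Inductive anc (rt : nat) (par : nat -> nat) (a : nat) : nat -> Prop :=
  | anc_refl : anc rt par a a
  | anc_step : forall w, w != rt -> anc rt par a (par w) -> anc rt par a w.

Definition pi_increasing_tree (pi : {fset {fset nat}})
    (V : {fset nat}) (rt : nat) (par : nat -> nat) : Prop :=
  increasing_tree V rt par /\
  (forall x, x \in V -> exists2 B, B \in pi & (x \in B) && (B `<=` V)) /\
  (forall B i j, B \in pi -> B `<=` V -> i \in B -> j \in B -> (i < j)%N ->
     anc rt par i j).

Definition dep_vertex (pi : {fset {fset nat}}) (V : {fset nat}) (B : {fset nat}) :=
  B \in pi /\ B `<=` V.

(* The chain a_1 < ... < a_l = v consists of the ancestors of v.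
   After removing the chain edges, a vertex w not on the chain lies in the
   component T^(a) (as a non-root vertex) where a is its nearest ancestor
   on the chain.  Edge B -> C of G_v(T): mu_B is not on the chain, and
   lies in T^(a) with a in C. *)
Definition dep_edge (pi : {fset {fset nat}}) (V : {fset nat}) (rt : nat)
    (par : nat -> nat) (v : nat) (B C : {fset nat}) : Prop :=
  dep_vertex pi V B /\ dep_vertex pi V C /\
  exists m, is_max B m /\ ~ anc rt par m v /\
  exists a, a \in C /\ anc rt par a v /\ anc rt par a m /\
    (forall u, anc rt par u v -> anc rt par u m -> anc rt par u a).

Definition dep_connected (pi : {fset {fset nat}}) (V : {fset nat}) (rt : nat)
    (par : nat -> nat) (v : nat) : {fset nat} -> {fset nat} -> Prop :=
  clos_refl_trans {fset nat}
    (fun B C => dep_edge pi V rt par v B C \/ dep_edge pi V rt par v C B).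

Definition irreducible (pi : {fset {fset nat}}) (V : {fset nat}) (rt : nat)
    (par : nat -> nat) : Prop :=
  forall M, M \in V -> (forall x, x \in V -> (x <= M)%N) ->
  forall B C, dep_vertex pi V B -> dep_vertex pi V C ->
    dep_connected pi V rt par M B C.

Definition reducible pi V rt par : Prop := ~ irreducible pi V rt par.

(* Let 1 be the root and M the maximum vertex; the chain of G_M(T) goes from 1
   to M != 1.  Call a block rooted if none of its vertices descends from a chain
   vertex other than the root, i.e. it lies in the component T^(1).  Rootedness
   propagates along every edge B -> C of G_M(T) in both directions: the attaching
   chain vertex a in C is then the root, so 1 is in C and C = {1}; conversely, if
   C is rooted then a = 1, and a chain vertex above some x in B would lie above
   the maximum of B (blocks are chains in T) hence above a, i.e. be the root.
   The block {1} is rooted while the block of M is not. *)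
From mathcomp Require Import all_boot.
From mathcomp Require Import finmap.
From mathcomp Require Import zify.
From Stdlib Require Import Relations.Relation_Operators.

Set Implicit Arguments.
Unset Strict Implicit.
Unset Printing Implicit Defensive.

Local Open Scope fset_scope.

Lemma anc_root rt par c : anc rt par c rt -> c = rt.
Proof. by move=> H; inversion H; rewrite // eqxx in H0. Qed.

Lemma anc_trans rt par a b c :
  anc rt par a b -> anc rt par b c -> anc rt par a c.
Proof. by move=> Hab; elim=> // w Hw _; apply: anc_step. Qed.

Lemma increasing_tree_root_min V rt par :
  increasing_tree V rt par -> forall v, v \in V -> (rt <= v)%N.
Proof.
move=> [_ [_ Hpar]] v; elim: v {-2}v (leqnn v) => [|n IH] v Hv HvV.
  by case: (eqVneq v rt) => [->//|/(Hpar _ HvV) [_]]; rewrite (leqn0 v) in Hv; lia.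
case: (eqVneq v rt) => [->//|/(Hpar _ HvV) [HpV Hlt]].
by apply: leq_trans (IH _ _ HpV) (ltnW Hlt); lia.
Qed.

Lemma pi_increasing_anc_max pi V rt par B m x :
  pi_increasing_tree pi V rt par -> dep_vertex pi V B -> is_max B m ->
  x \in B -> anc rt par x m.
Proof.
move=> [_ [_ Hanc]] [HB HBV] [Hm Hmax] Hx.
case: (ltngtP x m) => [Hlt | Hgt | ->]; last exact: anc_refl.
- exact: Hanc HB HBV Hx Hm Hlt.
- by have := Hmax _ Hx; lia.
Qed.

Section RootedBlocks.

Variables (pi : {fset {fset nat}}) (V : {fset nat}) (rt : nat) (par : nat -> nat).
Variable v : nat.

(* [w] lies in the component T^(rt) of the v-decomposition. *)
Definition rooted (w : nat) : Prop :=
  forall c, anc rt par c v -> c != rt -> ~ anc rt par c w.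

Definition rooted_block (B : {fset nat}) : Prop := forall x, x \in B -> rooted x.

Lemma rooted_chain_root a : anc rt par a v -> rooted a -> a = rt.
Proof. by move=> Hav Ha; apply/eqP/negPn/negP => /(Ha a Hav); apply; apply: anc_refl. Qed.

Lemma rooted_block_dep_edge_src B C :
  pi_increasing_tree pi V rt par ->
  dep_edge pi V rt par v B C -> rooted_block C -> rooted_block B.
Proof.
move=> HT [HB [_ [m [Hm [_ [a [HaC [Hav [_ Hnear]]]]]]]]] HC x Hx c Hcv Hc Hcx.
have Ha : a = rt := rooted_chain_root Hav (HC a HaC).
have Hcm : anc rt par c m := anc_trans Hcx (pi_increasing_anc_max HT HB Hm Hx).
by move: (Hnear c Hcv Hcm); rewrite Ha => /anc_root Ec; rewrite Ec eqxx in Hc.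
Qed.

Hypothesis root_block : [fset rt] \in pi.
Hypothesis pi_disjoint :
  forall B C, B \in pi -> C \in pi -> B != C -> B `&` C = fset0.

Lemma rooted_block_root : rooted_block [fset rt].
Proof. by move=> x; rewrite inE => /eqP -> c _ Hc /anc_root Ec; rewrite Ec eqxx in Hc. Qed.

Lemma rooted_block_dep_edge_dst B C :
  dep_edge pi V rt par v B C -> rooted_block B -> rooted_block C.
Proof.
move=> [_ [[HC _] [m [[HmB _] [_ [a [HaC [Hav [Ham _]]]]]]]]] HB.
have Ha : a = rt := rooted_chain_root Hav (fun c Hcv Hc Hca => HB m HmB c Hcv Hc (anc_trans Hca Ham)).
have -> : C = [fset rt]; last exact: rooted_block_root.
apply/eqP; apply: contraT => HCrt.
by have /fsetP /(_ rt) := pi_disjoint HC root_block HCrt; rewrite !inE -Ha HaC eqxx.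
Qed.

Lemma rooted_block_dep_connected B C :
  pi_increasing_tree pi V rt par ->
  dep_connected pi V rt par v B C -> rooted_block B -> rooted_block C.
Proof.
move=> HT; elim=> [X Y [E | E] | // | X Y Z _ IH1 _ IH2] HX; last by apply/IH2/IH1.
- exact: rooted_block_dep_edge_dst E HX.
- exact: rooted_block_dep_edge_src HT E HX.
Qed.

Lemma dep_disconnected_root_block (BM : {fset nat}) :
  pi_increasing_tree pi V rt par -> v != rt -> v \in BM ->
  ~ dep_connected pi V rt par v [fset rt] BM.
Proof.
move=> HT Hv HvB /(rooted_block_dep_connected HT) /(_ rooted_block_root) HBM.
by apply: (HBM v HvB v (anc_refl _ _ _) Hv); apply: anc_refl.
Qed.

End RootedBlocks.

Theorem proposition3p8 (r : nat) (pi : {fset {fset nat}})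
  (Hr : (2 <= r)%N) (Hpi : set_partition r pi) (H1 : [fset 1%N] \in pi)
  (V : {fset nat}) (rt : nat) (par : nat -> nat)
  (HT : pi_increasing_tree pi V rt par)
  (HV1 : 1%N \in V) (HVne : V != [fset 1%N])
  (M : nat) (HM : M \in V) (HMmax : forall x, x \in V -> (x <= M)%N) :
  (forall BM, BM \in pi -> M \in BM ->
     ~ dep_connected pi V rt par M [fset 1%N] BM) /\
  reducible pi V rt par.
Proof.
have [[Hrt [Hpos _]] [Hcov _]] := HT.
have Hdisj := proj1 (proj2 Hpi).
have Hrt1 : rt = 1%N.
  by have := increasing_tree_root_min (proj1 HT) HV1; have := Hpos _ Hrt; lia.
subst rt.
have HM1 : M != 1%N.
  apply: contra_neq HVne => EM; apply/fsetP=> x; rewrite inE.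
  by apply/idP/eqP => [Hx | ->//]; have := HMmax _ Hx; have := Hpos _ Hx; lia.
have Hdisc BM : M \in BM -> ~ dep_connected pi V 1 par M [fset 1%N] BM :=
  @dep_disconnected_root_block pi V 1 par M H1 Hdisj BM HT HM1.
split=> [BM _ | Hirr]; first exact: Hdisc.
have [BM HBM /andP [HMB HBV]] := Hcov _ HM.
apply: (Hdisc BM HMB); apply: Hirr => //.
by split=> //; apply/fsubsetP=> x; rewrite inE => /eqP ->.
Qed.
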